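(* Let $Q_1=(0,1)^2$, $Q_2=(-1,0)\times(0,1)$, $Q_3=(-1,0)^2$, $Q_4=(0,1)\times(-1,0)$. Let $g:\bigcup_{i=1}^4Q_i\to\mathbb{R}^2$ satisfy: (a) $g|_{Q_i}=P_i$ for polynomial maps $P_i:\mathbb{R}^2\to\mathbb{R}^2$ of degree at most two; (b) $g$ is $C^1$ across all coordinate interfaces, i.e. $g$ extends to a $C^1$ map on $(-1,1)^2$; (c) $\det Dg\geq\lambda>0$ on $\bigcup_iQ_i$. Fix a radial $\chi\in C_c^\infty(B_1(0))$ with $0\leq\chi\leq1$ and $\chi\equiv1$ on $B_{1/2}(0)$, set $\chi_\varepsilon(x)=\chi(x/\varepsilon)$, $P_*:=P_1$, and for $0<\varepsilon<1$ define \[ g_\varepsilon(x)=\begin{cases}P_*(x)+(1-\chi_\varepsilon(x))\bigl(g(x)-P_*(x)\bigr), & |x|<\varepsilon,\\ g(x), & |x|\geq\varepsilon.\end{cases} \] Then: (i) $g_\varepsilon$ is $C^1$ on $\bigcup_iQ_i$, indeed $C^1$ across the coordinate interfaces, and $g_\varepsilon\in C^\infty$ inside each $Q_i$; (ii) $g_\varepsilon=P_*$ on $B_{\varepsilon/2}(0)$ and $g_\varepsilon=g$ outside $B_\varepsilon(0)$; (iii) $g_\varepsilon\to g$ in $W^{2,1}(\bigcup_iQ_i)$ as $\varepsilon\downarrow0$; (iv) there is a constant $C$ independent of $\varepsilon$ with $\|Dg_\varepsilon-Dg\|_{L^\infty(\bigcup_iQ_i)}\leq C\varepsilon$; (v)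 $\det Dg_\varepsilon\geq\lambda/2$ for all sufficiently small $\varepsilon$. *)

From Stdlib Require Import Reals Lra.
From Coquelicot Require Import Coquelicot.
Open Scope R_scope.

Definition fn2 := R -> R -> R.
Definition map2 := R -> R -> R * R.
Definition cmp1 (f : map2) : fn2 := fun x y => fst (f x y).
Definition cmp2 (f : map2) : fn2 := fun x y => snd (f x y).

Definition nrm (x y : R) : R := sqrt (x ^ 2 + y ^ 2).

Definition dx (f : fn2) : fn2 := fun x y => Derive (fun t => f t y) x.
Definition dy (f : fn2) : fn2 := fun x y => Derive (fun t => f x t) y.

Fixpoint iterD (l : list bool) (f : fn2) : fn2 :=
  match l with
  | nil => f
  | cons b l' => (if b then dx else dy) (iterD l' f)
  end.

Definition C1_on (U : R -> R -> Prop) (f : fn2) : Prop :=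
  forall x y, U x y ->
    ex_derive (fun t => f t y) x /\ ex_derive (fun t => f x t) y /\
    continuity_2d_pt f x y /\ continuity_2d_pt (dx f) x y /\
    continuity_2d_pt (dy f) x y.

Definition Cinf_on (U : R -> R -> Prop) (f : fn2) : Prop :=
  forall l : list bool, C1_on U (iterD l f).

Definition C1_map_on (U : R -> R -> Prop) (f : map2) : Prop :=
  C1_on U (cmp1 f) /\ C1_on U (cmp2 f).
Definition Cinf_map_on (U : R -> R -> Prop) (f : map2) : Prop :=
  Cinf_on U (cmp1 f) /\ Cinf_on U (cmp2 f).

Definition is_poly_deg_le2 (f : fn2) : Prop :=
  exists a0 a1 a2 a3 a4 a5 : R, forall x y,
    f x y = a0 + a1 * x + a2 * y + a3 * x ^ 2 + a4 * x * y + a5 * y ^ 2.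
Definition is_poly_map_deg_le2 (P : map2) : Prop :=
  is_poly_deg_le2 (cmp1 P) /\ is_poly_deg_le2 (cmp2 P).

Definition Q1 (x y : R) : Prop := 0 < x < 1 /\ 0 < y < 1.
Definition Q2 (x y : R) : Prop := -1 < x < 0 /\ 0 < y < 1.
Definition Q3 (x y : R) : Prop := -1 < x < 0 /\ -1 < y < 0.
Definition Q4 (x y : R) : Prop := 0 < x < 1 /\ -1 < y < 0.
Definition Qunion (x y : R) : Prop := Q1 x y \/ Q2 x y \/ Q3 x y \/ Q4 x y.
Definition Sq (x y : R) : Prop := -1 < x < 1 /\ -1 < y < 1.

Definition jac_det (f : map2) : fn2 :=
  fun x y => dx (cmp1 f) x y * dy (cmp2 f) x y - dy (cmp1 f) x y * dx (cmp2 f) x y.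

Definition is_cutoff (chi : fn2) : Prop :=
  Cinf_on (fun _ _ => True) chi /\
  (exists r, r < 1 /\ forall x y, r <= nrm x y -> chi x y = 0) /\
  (forall x y, 0 <= chi x y <= 1) /\
  (forall x y, nrm x y < 1/2 -> chi x y = 1) /\
  (forall x y u v, nrm x y = nrm u v -> chi x y = chi u v).

Definition g_eps (g P : map2) (chi : fn2) (eps : R) : map2 :=
  fun x y =>
    if Rlt_dec (nrm x y) eps then
      let c := chi (x / eps) (y / eps) in
      (fst (P x y) + (1 - c) * (fst (g x y) - fst (P x y)),
       snd (P x y) + (1 - c) * (snd (g x y) - snd (P x y)))
    else g x y.

Definition W21_dens_comp (u : fn2) : fn2 := fun x y =>
  Rabs (u x y) + Rabs (dx u x y) + Rabs (dy u x y)
  + Rabs (dx (dx u) x y) + Rabs (dy (dx u) x y)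
  + Rabs (dx (dy u) x y) + Rabs (dy (dy u) x y).
Definition W21_dens (f h : map2) : fn2 := fun x y =>
  W21_dens_comp (fun a b => cmp1 f a b - cmp1 h a b) x y
  + W21_dens_comp (fun a b => cmp2 f a b - cmp2 h a b) x y.

Definition rect_integral (a b c d : R) (h : fn2) (v : R) : Prop :=
  (forall x, a < x < b -> ex_RInt (fun y => h x y) c d) /\
  is_RInt (fun x => RInt (fun y => h x y) c d) a b v.

Definition W21_conv (f : R -> map2) (h : map2) : Prop :=
  forall eta, 0 < eta -> exists delta, 0 < delta /\
    forall eps, 0 < eps < delta -> exists v1 v2 v3 v4,
      rect_integral 0 1 0 1 (W21_dens (f eps) h) v1 /\
      rect_integral (-1) 0 0 1 (W21_dens (f eps) h) v2 /\
      rect_integral (-1) 0 (-1) 0 (W21_dens (f eps) h) v3 /\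
      rect_integral 0 1 (-1) 0 (W21_dens (f eps) h) v4 /\
      v1 + v2 + v3 + v4 < eta.

From Stdlib Require Import Reals Lra Lia List FunctionalExtensionality Classical.
From Coquelicot Require Import Coquelicot.
Open Scope R_scope.

(* Matching the values and
   first derivatives of P_1 and P_i along a common half-axis kills every monomial of P_1 - P_i
   except the square of the variable transverse to that axis; chaining Q_1, Q_2, Q_3 and
   Q_1, Q_4 gives P_1 - P_i = a_i x^2 + b_i y^2 on every quadrant.  Hence on Q_i
     g_eps - g = chi(x/eps, y/eps) (a_i x^2 + b_i y^2) = eps^2 W_i(x/eps, y/eps),
   where W_i(s, t) = chi(s, t) (a_i s^2 + b_i t^2) is smooth and vanishes outside the unit
   square.  So g_eps is a polynomial plus a smooth function on Q_i, and a derivative of order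
   k of the correction is eps^(2-k) times a bounded function vanishing for |x| > eps: the
   derivatives of order at most two stay bounded on a strip of width 2 eps, which gives the
   W^{2,1} convergence, the first derivatives are O(eps), and the lower bound on the Jacobian
   follows by perturbing a 2x2 determinant. *)

(** * Open sets and the C^1 calculus *)

Definition open2 (U : R -> R -> Prop) : Prop := forall x y, U x y -> locally_2d U x y.

Definition rect (a b c d : R) : R -> R -> Prop := fun x y => a < x < b /\ c < y < d.

Lemma open2_rect a b c d : open2 (rect a b c d).
Proof.
intros x y [[hx1 hx2] [hy1 hy2]].
set (r := Rmin (Rmin (x - a) (b - x)) (Rmin (y - c) (d - y))).
assert (hr : 0 < r) by (repeat apply Rmin_pos; lra).
pose proof (Rmin_l (Rmin (x - a) (b - x)) (Rmin (y - c) (d - y))).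
pose proof (Rmin_r (Rmin (x - a) (b - x)) (Rmin (y - c) (d - y))).
pose proof (Rmin_l (x - a) (b - x)); pose proof (Rmin_r (x - a) (b - x)).
pose proof (Rmin_l (y - c) (d - y)); pose proof (Rmin_r (y - c) (d - y)).
exists (mkposreal r hr); simpl; intros u v hu hv.
apply Rabs_def2 in hu; apply Rabs_def2 in hv; unfold r in *; split; lra.
Qed.

Lemma open2_True : open2 (fun _ _ => True).
Proof. intros x y _; exists (mkposreal 1 Rlt_0_1); auto. Qed.

Lemma open2_locally_x U x y : open2 U -> U x y -> locally x (fun t => U t y).
Proof.
intros HU Hxy; destruct (HU x y Hxy) as [d Hd]; exists d; intros t Ht.
apply Hd; [exact Ht | rewrite Rminus_eq_0, Rabs_R0; apply cond_pos].
Qed.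

Lemma open2_locally_y U x y : open2 U -> U x y -> locally y (fun t => U x t).
Proof.
intros HU Hxy; destruct (HU x y Hxy) as [d Hd]; exists d; intros t Ht.
apply Hd; [rewrite Rminus_eq_0, Rabs_R0; apply cond_pos | exact Ht].
Qed.

Lemma iterD_ext_open U f h : open2 U -> (forall x y, U x y -> f x y = h x y) ->
  forall l x y, U x y -> iterD l f x y = iterD l h x y.
Proof.
intros HU Hfh l; induction l as [|[] l IH]; intros x y Hxy; simpl; auto;
  apply Derive_ext_loc.
- apply (filter_imp (fun t => U t y)); [intros t; apply IH | now apply open2_locally_x].
- apply (filter_imp (fun t => U x t)); [intros t; apply IH | now apply open2_locally_y].
Qed.

Lemma C1_on_intro U f fx fy : open2 U ->
  (forall x y, U x y -> ex_derive (fun t => f t y) x /\ ex_derive (fun t => f x t) y /\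
     dx f x y = fx x y /\ dy f x y = fy x y) ->
  (forall x y, U x y ->
     continuity_2d_pt f x y /\ continuity_2d_pt fx x y /\ continuity_2d_pt fy x y) ->
  C1_on U f.
Proof.
intros HU Hd Hc x y Hxy.
destruct (Hd x y Hxy) as (h1 & h2 & _ & _); destruct (Hc x y Hxy) as (c1 & c2 & c3).
destruct (HU x y Hxy) as [r Hr].
repeat split; auto.
- apply (continuity_2d_pt_ext_loc fx); [exists r; intros u v hu hv; symmetry|exact c2].
  apply Hd; auto.
- apply (continuity_2d_pt_ext_loc fy); [exists r; intros u v hu hv; symmetry|exact c3].
  apply Hd; auto.
Qed.

Lemma C1_on_ext_open U f h : open2 U -> (forall x y, U x y -> f x y = h x y) ->
  C1_on U h -> C1_on U f.
Proof.
intros HU Hfh Hh.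
apply (C1_on_intro U f (dx h) (dy h) HU).
- intros x y Hxy; destruct (Hh x y Hxy) as (h1 & h2 & _).
  repeat split.
  + apply (ex_derive_ext_loc (fun t => h t y)); [|exact h1].
    apply (filter_imp (fun t => U t y)); [intros t Ht; symmetry; auto|].
    now apply open2_locally_x.
  + apply (ex_derive_ext_loc (fun t => h x t)); [|exact h2].
    apply (filter_imp (fun t => U x t)); [intros t Ht; symmetry; auto|].
    now apply open2_locally_y.
  + exact (iterD_ext_open U f h HU Hfh (true :: nil) x y Hxy).
  + exact (iterD_ext_open U f h HU Hfh (false :: nil) x y Hxy).
- intros x y Hxy; destruct (Hh x y Hxy) as (_ & _ & c1 & c2 & c3); repeat split; auto.
  destruct (HU x y Hxy) as [r Hr].
  apply (continuity_2d_pt_ext_loc h); [exists r; intros u v hu hv; symmetry|exact c1].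
  apply Hfh, Hr; auto.
Qed.

Lemma C1_on_plus U f h : open2 U -> C1_on U f -> C1_on U h ->
  C1_on U (fun x y => f x y + h x y).
Proof.
intros HU Hf Hh.
apply (C1_on_intro U _ (fun x y => dx f x y + dx h x y) (fun x y => dy f x y + dy h x y) HU).
- intros x y Hxy; destruct (Hf x y Hxy) as (a1 & a2 & _), (Hh x y Hxy) as (b1 & b2 & _).
  repeat split;
    try exact (ex_derive_plus _ _ _ a1 b1); try exact (ex_derive_plus _ _ _ a2 b2).
  + apply (Derive_plus (fun t => f t y) (fun t => h t y)); assumption.
  + apply (Derive_plus (fun t => f x t) (fun t => h x t)); assumption.
- intros x y Hxy; destruct (Hf x y Hxy) as (_ & _ & a3 & a4 & a5),
    (Hh x y Hxy) as (_ & _ & b3 & b4 & b5).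
  repeat split; apply continuity_2d_pt_plus; assumption.
Qed.

Lemma C1_on_minus U f h : open2 U -> C1_on U f -> C1_on U h ->
  C1_on U (fun x y => f x y - h x y).
Proof.
intros HU Hf Hh.
apply (C1_on_intro U _ (fun x y => dx f x y - dx h x y) (fun x y => dy f x y - dy h x y) HU).
- intros x y Hxy; destruct (Hf x y Hxy) as (a1 & a2 & _), (Hh x y Hxy) as (b1 & b2 & _).
  repeat split;
    try exact (ex_derive_minus _ _ _ a1 b1); try exact (ex_derive_minus _ _ _ a2 b2).
  + apply (Derive_minus (fun t => f t y) (fun t => h t y)); assumption.
  + apply (Derive_minus (fun t => f x t) (fun t => h x t)); assumption.
- intros x y Hxy; destruct (Hf x y Hxy) as (_ & _ & a3 & a4 & a5),
    (Hh x y Hxy) as (_ & _ & b3 & b4 & b5).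
  repeat split; apply continuity_2d_pt_minus; assumption.
Qed.

Lemma C1_on_mult U f h : open2 U -> C1_on U f -> C1_on U h ->
  C1_on U (fun x y => f x y * h x y).
Proof.
intros HU Hf Hh.
apply (C1_on_intro U _ (fun x y => dx f x y * h x y + f x y * dx h x y)
                       (fun x y => dy f x y * h x y + f x y * dy h x y) HU).
- intros x y Hxy; destruct (Hf x y Hxy) as (a1 & a2 & _), (Hh x y Hxy) as (b1 & b2 & _).
  repeat split;
    try exact (ex_derive_mult _ _ _ a1 b1); try exact (ex_derive_mult _ _ _ a2 b2).
  + apply (Derive_mult (fun t => f t y) (fun t => h t y)); assumption.
  + apply (Derive_mult (fun t => f x t) (fun t => h x t)); assumption.
- intros x y Hxy; destruct (Hf x y Hxy) as (_ & _ & a3 & a4 & a5),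
    (Hh x y Hxy) as (_ & _ & b3 & b4 & b5).
  repeat split;
    repeat first [apply continuity_2d_pt_plus | apply continuity_2d_pt_mult]; assumption.
Qed.

Lemma C1_on_const U c : open2 U -> C1_on U (fun _ _ => c).
Proof.
intros HU; apply (C1_on_intro U _ (fun _ _ => 0) (fun _ _ => 0) HU).
- intros x y _; unfold dx, dy; repeat split; try apply ex_derive_const; apply Derive_const.
- intros x y _; repeat split; apply continuity_2d_pt_const.
Qed.

Lemma C1_on_id1 U : open2 U -> C1_on U (fun x _ => x).
Proof.
intros HU; apply (C1_on_intro U _ (fun _ _ => 1) (fun _ _ => 0) HU).
- intros x y _; unfold dx, dy; repeat split; [apply ex_derive_id | apply ex_derive_const |
    apply Derive_id | apply Derive_const].
- intros x y _; repeat split; try apply continuity_2d_pt_const; apply continuity_2d_pt_id1.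
Qed.

Lemma C1_on_id2 U : open2 U -> C1_on U (fun _ y => y).
Proof.
intros HU; apply (C1_on_intro U _ (fun _ _ => 0) (fun _ _ => 1) HU).
- intros x y _; unfold dx, dy; repeat split; [apply ex_derive_const | apply ex_derive_id |
    apply Derive_const | apply Derive_id].
- intros x y _; repeat split; try apply continuity_2d_pt_const; apply continuity_2d_pt_id2.
Qed.

Definition smooth (f : fn2) : Prop := Cinf_on (fun _ _ => True) f.

Definition smooth_upto (n : nat) (f : fn2) : Prop :=
  forall l, (length l <= n)%nat -> C1_on (fun _ _ => True) (iterD l f).

Lemma smooth_C1_on U l f : smooth f -> C1_on U (iterD l f).
Proof. intros Hf x y _; exact (Hf l x y I). Qed.

Lemma iterD_app l b f : iterD (l ++ b :: nil) f = iterD l ((if b then dx else dy) f).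
Proof. induction l as [|c l IH]; simpl; [reflexivity | now rewrite IH]. Qed.

Lemma smooth_iff_upto f : smooth f <-> forall n, smooth_upto n f.
Proof.
split; intros Hf.
- intros n l _; apply Hf.
- intros l; apply (Hf (length l) l); lia.
Qed.

Lemma smooth_upto_le m n f : (m <= n)%nat -> smooth_upto n f -> smooth_upto m f.
Proof. intros Hmn Hf l Hl; apply Hf; lia. Qed.

Lemma smooth_upto_C1 n f : smooth_upto n f -> C1_on (fun _ _ => True) f.
Proof. intros Hf; apply (Hf nil); simpl; lia. Qed.

Lemma smooth_upto_S n f : C1_on (fun _ _ => True) f ->
  smooth_upto n (dx f) -> smooth_upto n (dy f) -> smooth_upto (S n) f.
Proof.
intros H0 Hx Hy l Hl; destruct l as [|b l] using rev_ind; [exact H0|].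
rewrite length_app in Hl; simpl in Hl.
rewrite iterD_app; destruct b; [apply Hx | apply Hy]; lia.
Qed.

Lemma smooth_upto_dx n f : smooth_upto (S n) f -> smooth_upto n (dx f).
Proof.
intros Hf l Hl; rewrite <- (iterD_app l true); apply Hf.
rewrite length_app; simpl; lia.
Qed.

Lemma smooth_upto_dy n f : smooth_upto (S n) f -> smooth_upto n (dy f).
Proof.
intros Hf l Hl; rewrite <- (iterD_app l false); apply Hf.
rewrite length_app; simpl; lia.
Qed.

Section PartialRules.
Variables f h : fn2.
Hypotheses (Hf : C1_on (fun _ _ => True) f) (Hh : C1_on (fun _ _ => True) h).

Lemma dx_plus : dx (fun x y => f x y + h x y) = fun x y => dx f x y + dx h x y.
Proof.
apply functional_extensionality; intro x; apply functional_extensionality; intro y.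
destruct (Hf x y I) as (fx & _), (Hh x y I) as (hx & _).
exact (Derive_plus (fun t => f t y) (fun t => h t y) x fx hx).
Qed.

Lemma dy_plus : dy (fun x y => f x y + h x y) = fun x y => dy f x y + dy h x y.
Proof.
apply functional_extensionality; intro x; apply functional_extensionality; intro y.
destruct (Hf x y I) as (_ & fy & _), (Hh x y I) as (_ & hy & _).
exact (Derive_plus (fun t => f x t) (fun t => h x t) y fy hy).
Qed.

Lemma dx_mult :
  dx (fun x y => f x y * h x y) = fun x y => dx f x y * h x y + f x y * dx h x y.
Proof.
apply functional_extensionality; intro x; apply functional_extensionality; intro y.
destruct (Hf x y I) as (fx & _), (Hh x y I) as (hx & _).
exact (Derive_mult (fun t => f t y) (fun t => h t y) x fx hx).
Qed.

Lemma dy_mult :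
  dy (fun x y => f x y * h x y) = fun x y => dy f x y * h x y + f x y * dy h x y.
Proof.
apply functional_extensionality; intro x; apply functional_extensionality; intro y.
destruct (Hf x y I) as (_ & fy & _), (Hh x y I) as (_ & hy & _).
exact (Derive_mult (fun t => f x t) (fun t => h x t) y fy hy).
Qed.

End PartialRules.

Lemma iterD_plus_upto n f h : smooth_upto n f -> smooth_upto n h ->
  forall l, (length l <= n)%nat ->
  iterD l (fun x y => f x y + h x y) = fun x y => iterD l f x y + iterD l h x y.
Proof.
intros Hf Hh l; induction l as [|b l IH]; intros Hl; [reflexivity|].
simpl in Hl; assert (Hfl : C1_on (fun _ _ => True) (iterD l f)) by (apply Hf; lia).
assert (Hhl : C1_on (fun _ _ => True) (iterD l h)) by (apply Hh; lia).
simpl; rewrite IH by lia.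
destruct b; [exact (dx_plus _ _ Hfl Hhl) | exact (dy_plus _ _ Hfl Hhl)].
Qed.

Lemma smooth_upto_plus n f h : smooth_upto n f -> smooth_upto n h ->
  smooth_upto n (fun x y => f x y + h x y).
Proof.
intros Hf Hh l Hl; rewrite (iterD_plus_upto n f h Hf Hh l Hl).
apply C1_on_plus; [apply open2_True | apply Hf | apply Hh]; exact Hl.
Qed.

Lemma smooth_upto_mult n : forall f h, smooth_upto n f -> smooth_upto n h ->
  smooth_upto n (fun x y => f x y * h x y).
Proof.
induction n as [|n IH]; intros f h Hf Hh.
- intros [|b l] Hl; simpl in Hl; [|lia].
  apply C1_on_mult; [apply open2_True | apply (smooth_upto_C1 0) ..]; assumption.
- assert (Hf0 := smooth_upto_C1 _ _ Hf); assert (Hh0 := smooth_upto_C1 _ _ Hh).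
  assert (Hfn := smooth_upto_le n (S n) f (Nat.le_succ_diag_r n) Hf).
  assert (Hhn := smooth_upto_le n (S n) h (Nat.le_succ_diag_r n) Hh).
  apply smooth_upto_S; [apply C1_on_mult; [apply open2_True | exact Hf0 | exact Hh0]| |].
  + rewrite (dx_mult f h Hf0 Hh0).
    apply smooth_upto_plus; apply IH; auto using smooth_upto_dx.
  + rewrite (dy_mult f h Hf0 Hh0).
    apply smooth_upto_plus; apply IH; auto using smooth_upto_dy.
Qed.

Lemma smooth_plus f h : smooth f -> smooth h -> smooth (fun x y => f x y + h x y).
Proof. rewrite !smooth_iff_upto; intros; apply smooth_upto_plus; auto. Qed.

Lemma smooth_mult f h : smooth f -> smooth h -> smooth (fun x y => f x y * h x y).
Proof. rewrite !smooth_iff_upto; intros; apply smooth_upto_mult; auto. Qed.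

Lemma iterD_plus f h l : smooth f -> smooth h ->
  iterD l (fun x y => f x y + h x y) = fun x y => iterD l f x y + iterD l h x y.
Proof.
rewrite !smooth_iff_upto; intros Hf Hh.
apply (iterD_plus_upto (length l)); auto.
Qed.

Lemma smooth_ext f h : (forall x y, f x y = h x y) -> smooth f -> smooth h.
Proof.
intros Efh; replace h with f; [easy|].
do 2 (apply functional_extensionality; intro); apply Efh.
Qed.

Lemma dx_const c : dx (fun _ _ => c) = fun _ _ => 0.
Proof. do 2 (apply functional_extensionality; intro); apply (Derive_const c). Qed.

Lemma dy_const c : dy (fun _ _ => c) = fun _ _ => 0.
Proof. do 2 (apply functional_extensionality; intro); apply (Derive_const c). Qed.

Lemma smooth_const c : smooth (fun _ _ => c).
Proof.
apply smooth_iff_upto; intros n; revert c; induction n as [|n IH]; intros c.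
- intros [|b l] Hl; simpl in Hl; [apply C1_on_const, open2_True | lia].
- apply smooth_upto_S; [apply C1_on_const, open2_True | rewrite dx_const | rewrite dy_const];
    apply IH.
Qed.

Lemma smooth_id1 : smooth (fun x _ => x).
Proof.
apply smooth_iff_upto; intros [|n].
- intros [|b l] Hl; simpl in Hl; [apply C1_on_id1, open2_True | lia].
- apply smooth_upto_S; [apply C1_on_id1, open2_True| |].
  + replace (dx (fun x _ => x)) with (fun _ _ : R => 1); [apply smooth_iff_upto, smooth_const|].
    do 2 (apply functional_extensionality; intro); symmetry; apply Derive_id.
  + replace (dy (fun x _ => x)) with (fun _ _ : R => 0); [apply smooth_iff_upto, smooth_const|].
    do 2 (apply functional_extensionality; intro); unfold dy; symmetry; apply Derive_const.
Qed.

Lemma smooth_id2 : smooth (fun _ y => y).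
Proof.
apply smooth_iff_upto; intros [|n].
- intros [|b l] Hl; simpl in Hl; [apply C1_on_id2, open2_True | lia].
- apply smooth_upto_S; [apply C1_on_id2, open2_True| |].
  + replace (dx (fun _ y => y)) with (fun _ _ : R => 0); [apply smooth_iff_upto, smooth_const|].
    do 2 (apply functional_extensionality; intro); unfold dx; symmetry; apply Derive_const.
  + replace (dy (fun _ y => y)) with (fun _ _ : R => 1); [apply smooth_iff_upto, smooth_const|].
    do 2 (apply functional_extensionality; intro); symmetry; apply Derive_id.
Qed.

Definition rescale (c e : R) (F : fn2) : fn2 := fun x y => c * F (x / e) (y / e).

Lemma continuity_2d_pt_rescale F e x y : 0 < e ->
  continuity_2d_pt F (x / e) (y / e) -> continuity_2d_pt (fun u v => F (u / e) (v / e)) x y.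
Proof.
intros He HF eps; destruct (HF eps) as [d Hd].
assert (Hde : 0 < d * e) by (apply Rmult_lt_0_compat; [apply cond_pos | lra]).
assert (Hscale : forall u z, Rabs (u - z) < d * e -> Rabs (u / e - z / e) < d).
{ intros u z Huz; replace (u / e - z / e) with ((u - z) / e) by (field; lra).
  unfold Rdiv; rewrite Rabs_mult, Rabs_inv, (Rabs_pos_eq e) by lra.
  apply (Rmult_lt_reg_r e); [lra|]; field_simplify; lra. }
exists (mkposreal _ Hde); simpl; intros u v hu hv; apply Hd; auto.
Qed.

Lemma dx_rescale c e G : (forall x y, ex_derive (fun t => G t y) x) ->
  dx (rescale c e G) = rescale (c * / e) e (dx G).
Proof.
intros HG; apply functional_extensionality; intro x; apply functional_extensionality; intro y.
apply is_derive_unique; unfold rescale, dx.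
assert (H := HG (x / e) (y / e)); auto_derive; [exact H | unfold Rdiv; ring].
Qed.

Lemma dy_rescale c e G : (forall x y, ex_derive (fun t => G x t) y) ->
  dy (rescale c e G) = rescale (c * / e) e (dy G).
Proof.
intros HG; apply functional_extensionality; intro x; apply functional_extensionality; intro y.
apply is_derive_unique; unfold rescale, dy.
assert (H := HG (x / e) (y / e)); auto_derive; [exact H | unfold Rdiv; ring].
Qed.

Lemma iterD_rescale c e F l : smooth F ->
  iterD l (rescale c e F) = rescale (c * (/ e) ^ length l) e (iterD l F).
Proof.
intros HF; induction l as [|[] l IH]; simpl.
- unfold rescale; now rewrite Rmult_1_r.
- rewrite IH, dx_rescale by (intros x y; apply (HF l x y I)).
  unfold rescale; do 2 (apply functional_extensionality; intro); ring.
- rewrite IH, dy_rescale by (intros x y; apply (HF l x y I)).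
  unfold rescale; do 2 (apply functional_extensionality; intro); ring.
Qed.

Lemma C1_on_rescale c e F : 0 < e -> C1_on (fun _ _ => True) F ->
  C1_on (fun _ _ => True) (rescale c e F).
Proof.
intros He HF.
apply (C1_on_intro _ _ (rescale (c * / e) e (dx F)) (rescale (c * / e) e (dy F)) open2_True).
- intros x y _; destruct (HF (x / e) (y / e) I) as (h1 & h2 & _).
  rewrite dx_rescale, dy_rescale by (intros u v; apply (HF u v I)).
  unfold rescale; repeat split; auto_derive; auto; lra.
- intros x y _; destruct (HF (x / e) (y / e) I) as (_ & _ & h3 & h4 & h5).
  unfold rescale; repeat split; apply continuity_2d_pt_mult;
    try apply continuity_2d_pt_const; apply continuity_2d_pt_rescale; auto.
Qed.

Lemma smooth_rescale c e F : 0 < e -> smooth F -> smooth (rescale c e F).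
Proof.
intros He HF l; rewrite (iterD_rescale c e F l HF).
apply C1_on_rescale; [exact He | apply HF].
Qed.

Definition quad_poly (a0 a1 a2 a3 a4 a5 : R) : fn2 :=
  fun x y => a0 + a1 * x + a2 * y + a3 * x ^ 2 + a4 * x * y + a5 * y ^ 2.

Lemma smooth_quad_poly a0 a1 a2 a3 a4 a5 : smooth (quad_poly a0 a1 a2 a3 a4 a5).
Proof.
apply (smooth_ext (fun x y =>
  a0 + a1 * x + a2 * y + a3 * (x * x) + a4 * x * y + a5 * (y * y)));
  [intros; unfold quad_poly; ring|].
repeat match goal with
  | |- smooth (fun _ _ => _ + _) => apply smooth_plus
  | |- smooth (fun _ _ => _ * _) => apply smooth_mult
  | |- smooth (fun x _ => x) => apply smooth_id1
  | |- smooth (fun _ y => y) => apply smooth_id2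
  | |- smooth (fun _ _ => _) => apply smooth_const
  end.
Qed.

Lemma smooth_poly_deg_le2 p : is_poly_deg_le2 p -> smooth p.
Proof.
intros (a0 & a1 & a2 & a3 & a4 & a5 & Hp).
apply (smooth_ext (quad_poly a0 a1 a2 a3 a4 a5)); [intros; symmetry; apply Hp|].
apply smooth_quad_poly.
Qed.

Lemma dx_quad_poly a0 a1 a2 a3 a4 a5 x y :
  dx (quad_poly a0 a1 a2 a3 a4 a5) x y = a1 + 2 * a3 * x + a4 * y.
Proof. unfold dx, quad_poly; apply is_derive_unique; auto_derive; auto; ring. Qed.

Lemma dy_quad_poly a0 a1 a2 a3 a4 a5 x y :
  dy (quad_poly a0 a1 a2 a3 a4 a5) x y = a2 + a4 * x + 2 * a5 * y.
Proof. unfold dy, quad_poly; apply is_derive_unique; auto_derive; auto; ring. Qed.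

(** * Matching the quadrant polynomials across the axes *)

Lemma segment_limit_zero h x0 y0 ux uy : continuity_2d_pt h x0 y0 ->
  Rabs ux <= 1 -> Rabs uy <= 1 ->
  (forall t, 0 < t < 1 -> h (x0 + t * ux) (y0 + t * uy) = 0) -> h x0 y0 = 0.
Proof.
intros Hh hux huy Hseg; apply cond_eq; intros eps Heps.
destruct (Hh (mkposreal eps Heps)) as [d Hd]; simpl in Hd.
assert (Hd0 := cond_pos d).
set (t := Rmin d 1 / 2).
assert (ht : 0 < t < 1 /\ t < d).
{ unfold t; pose proof (Rmin_l d 1); pose proof (Rmin_r d 1).
  assert (0 < Rmin d 1) by (apply Rmin_pos; lra); lra. }
assert (Hstep : forall z u, Rabs u <= 1 -> Rabs (z + t * u - z) < d).
{ intros z u hu; replace (z + t * u - z) with (t * u) by ring.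
  rewrite Rabs_mult, (Rabs_pos_eq t) by lra; nra. }
specialize (Hd _ _ (Hstep x0 ux hux) (Hstep y0 uy huy)).
rewrite Hseg in Hd by lra; rewrite Rabs_minus_sym in Hd; exact Hd.
Qed.

Lemma one_sided_first_order F p U x0 y0 ux uy : open2 U -> smooth p ->
  (forall x y, U x y -> F x y = p x y) ->
  continuity_2d_pt F x0 y0 -> continuity_2d_pt (dx F) x0 y0 -> continuity_2d_pt (dy F) x0 y0 ->
  Rabs ux <= 1 -> Rabs uy <= 1 -> (forall t, 0 < t < 1 -> U (x0 + t * ux) (y0 + t * uy)) ->
  F x0 y0 = p x0 y0 /\ dx F x0 y0 = dx p x0 y0 /\ dy F x0 y0 = dy p x0 y0.
Proof.
intros HU Hp Hfp c0 c1 c2 hux huy Hseg.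
assert (Hl : forall l, continuity_2d_pt (iterD l F) x0 y0 ->
  iterD l F x0 y0 = iterD l p x0 y0).
{ intros l Hc; apply Rminus_diag_uniq.
  apply (segment_limit_zero (fun x y => iterD l F x y - iterD l p x y) x0 y0 ux uy);
    auto.
  - apply continuity_2d_pt_minus; [exact Hc | apply (Hp l x0 y0 I)].
  - intros t Ht; rewrite (iterD_ext_open U F p HU Hfp l) by auto; ring. }
split; [|split]; [apply (Hl nil) | apply (Hl (true :: nil)) | apply (Hl (false :: nil))];
  assumption.
Qed.

Lemma C1_interface W F p q U V x0 y0 ux uy : open2 U -> open2 V -> smooth p -> smooth q ->
  C1_on W F -> W x0 y0 ->
  (forall x y, U x y -> F x y = p x y) -> (forall x y, V x y -> F x y = q x y) ->
  Rabs ux <= 1 -> Rabs uy <= 1 ->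
  (forall t, 0 < t < 1 -> U (x0 + t * ux) (y0 + t * uy)) ->
  (forall t, 0 < t < 1 -> V (x0 + t * - ux) (y0 + t * - uy)) ->
  p x0 y0 = q x0 y0 /\ dx p x0 y0 = dx q x0 y0 /\ dy p x0 y0 = dy q x0 y0.
Proof.
intros HU HV Hp Hq HF Hx0 Hfp Hfq hux huy HsU HsV.
destruct (HF x0 y0 Hx0) as (_ & _ & c0 & c1 & c2).
destruct (one_sided_first_order F p U x0 y0 ux uy) as (e0 & e1 & e2); auto.
destruct (one_sided_first_order F q V x0 y0 (- ux) (- uy)) as (f0 & f1 & f2);
  try rewrite Rabs_Ropp; auto.
split; [|split]; congruence.
Qed.

Lemma quadratic_zero_on_01 c0 c1 c2 :
  (forall t, 0 < t < 1 -> c0 + c1 * t + c2 * t ^ 2 = 0) -> c0 = 0 /\ c1 = 0 /\ c2 = 0.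
Proof.
intros H.
assert (H1 := H (1/4) ltac:(lra)); assert (H2 := H (1/2) ltac:(lra));
  assert (H3 := H (3/4) ltac:(lra)).
simpl in H1, H2, H3; lra.
Qed.

Lemma poly_deg_le2_eq p : is_poly_deg_le2 p ->
  exists a0 a1 a2 a3 a4 a5, p = quad_poly a0 a1 a2 a3 a4 a5.
Proof.
intros (a0 & a1 & a2 & a3 & a4 & a5 & Hp); exists a0, a1, a2, a3, a4, a5.
apply functional_extensionality; intro x; apply functional_extensionality; intro y; apply Hp.
Qed.

Lemma Rmult_eq_0_reg_r a s : s <> 0 -> a * s = 0 -> a = 0.
Proof. intros Hs H; destruct (Rmult_integral _ _ H); [easy | contradiction]. Qed.

Lemma poly_match_on_y_axis p q s : is_poly_deg_le2 p -> is_poly_deg_le2 q -> s <> 0 ->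
  (forall t, 0 < t < 1 -> p 0 (s * t) = q 0 (s * t) /\ dx p 0 (s * t) = dx q 0 (s * t)) ->
  exists a, forall x y, p x y - q x y = a * x ^ 2.
Proof.
intros Hp Hq Hs H.
destruct (poly_deg_le2_eq p Hp) as (a0 & a1 & a2 & a3 & a4 & a5 & ->).
destruct (poly_deg_le2_eq q Hq) as (b0 & b1 & b2 & b3 & b4 & b5 & ->).
destruct (quadratic_zero_on_01 (a0 - b0) ((a2 - b2) * s) ((a5 - b5) * s ^ 2))
  as (E0 & E2 & E5).
{ intros t Ht; destruct (H t Ht) as [Hv _]; unfold quad_poly in Hv; lra. }
destruct (quadratic_zero_on_01 (a1 - b1) ((a4 - b4) * s) 0) as (E1 & E4 & _).
{ intros t Ht; destruct (H t Ht) as [_ Hd]; rewrite !dx_quad_poly in Hd; lra. }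
apply Rmult_eq_0_reg_r in E2, E4, E5; try (apply pow_nonzero); auto.
exists (a3 - b3); intros x y; unfold quad_poly; nra.
Qed.

Lemma poly_match_on_x_axis p q s : is_poly_deg_le2 p -> is_poly_deg_le2 q -> s <> 0 ->
  (forall t, 0 < t < 1 -> p (s * t) 0 = q (s * t) 0 /\ dy p (s * t) 0 = dy q (s * t) 0) ->
  exists b, forall x y, p x y - q x y = b * y ^ 2.
Proof.
intros Hp Hq Hs H.
destruct (poly_deg_le2_eq p Hp) as (a0 & a1 & a2 & a3 & a4 & a5 & ->).
destruct (poly_deg_le2_eq q Hq) as (b0 & b1 & b2 & b3 & b4 & b5 & ->).
destruct (quadratic_zero_on_01 (a0 - b0) ((a1 - b1) * s) ((a3 - b3) * s ^ 2))
  as (E0 & E1 & E3).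
{ intros t Ht; destruct (H t Ht) as [Hv _]; unfold quad_poly in Hv; lra. }
destruct (quadratic_zero_on_01 (a2 - b2) ((a4 - b4) * s) 0) as (E2 & E4 & _).
{ intros t Ht; destruct (H t Ht) as [_ Hd]; rewrite !dy_quad_poly in Hd; lra. }
apply Rmult_eq_0_reg_r in E1, E3, E4; try (apply pow_nonzero); auto.
exists (a5 - b5); intros x y; unfold quad_poly; nra.
Qed.

Definition differ_by_squares (p q : fn2) : Prop :=
  exists a b, forall x y, p x y - q x y = a * x ^ 2 + b * y ^ 2.

Lemma C1_quadrant_polys F p1 p2 p3 p4 : C1_on Sq F ->
  is_poly_deg_le2 p1 -> is_poly_deg_le2 p2 -> is_poly_deg_le2 p3 -> is_poly_deg_le2 p4 ->
  (forall x y, Q1 x y -> F x y = p1 x y) -> (forall x y, Q2 x y -> F x y = p2 x y) ->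
  (forall x y, Q3 x y -> F x y = p3 x y) -> (forall x y, Q4 x y -> F x y = p4 x y) ->
  differ_by_squares p1 p2 /\ differ_by_squares p1 p3 /\ differ_by_squares p1 p4.
Proof.
intros HF H1 H2 H3 H4 E1 E2 E3 E4.
assert (O1 : open2 Q1) by exact (open2_rect 0 1 0 1).
assert (O2 : open2 Q2) by exact (open2_rect (-1) 0 0 1).
assert (O3 : open2 Q3) by exact (open2_rect (-1) 0 (-1) 0).
assert (O4 : open2 Q4) by exact (open2_rect 0 1 (-1) 0).
assert (R1 : Rabs 1 <= 1) by (rewrite Rabs_R1; lra).
assert (R0 : Rabs 0 <= 1) by (rewrite Rabs_R0; lra).
destruct (poly_match_on_y_axis p1 p2 1 H1 H2 ltac:(lra)) as [a12 D12].
{ intros t Ht.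
  destruct (C1_interface Sq F p1 p2 Q1 Q2 0 (1 * t) 1 0) as (v & d & _);
    auto using smooth_poly_deg_le2; try (unfold Sq, Q1, Q2; intros; lra). }
destruct (poly_match_on_x_axis p1 p4 1 H1 H4 ltac:(lra)) as [b14 D14].
{ intros t Ht.
  destruct (C1_interface Sq F p1 p4 Q1 Q4 (1 * t) 0 0 1) as (v & _ & d);
    auto using smooth_poly_deg_le2; try (unfold Sq, Q1, Q4; intros; lra). }
destruct (poly_match_on_x_axis p2 p3 (-1) H2 H3 ltac:(lra)) as [b23 D23].
{ intros t Ht.
  destruct (C1_interface Sq F p2 p3 Q2 Q3 (-1 * t) 0 0 1) as (v & _ & d);
    auto using smooth_poly_deg_le2; try (unfold Sq, Q2, Q3; intros; lra). }
split; [|split].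
- exists a12, 0; intros x y; rewrite D12; ring.
- exists a12, b23; intros x y.
  replace (p1 x y - p3 x y) with ((p1 x y - p2 x y) + (p2 x y - p3 x y)) by ring.
  rewrite D12, D23; ring.
- exists 0, b14; intros x y; rewrite D14; ring.
Qed.

(** * The rescaled cutoff profile *)

Lemma continuous_bounded_on_square f :
  (forall x y, -1 <= x <= 1 -> -1 <= y <= 1 -> continuity_2d_pt f x y) ->
  exists M, forall x y, -1 <= x <= 1 -> -1 <= y <= 1 -> Rabs (f x y) <= M.
Proof.
intros Hf.
destruct (uniform_continuity_2d f (-1) 1 (-1) 1 Hf (mkposreal 1 Rlt_0_1)) as [d Hd].
set (size := fun t : Compactness.Tn 2 R => let '(u, (v, _)) := t in Rabs (f u v)).
assert (Hbound : forall l : list (Compactness.Tn 2 R), exists B, forall t, In t l -> size t <= B).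
{ induction l as [|t0 l [B HB]]; [exists 0; intros t []|].
  exists (Rmax (size t0) B); intros t [<- | Ht]; [apply Rmax_l|].
  apply Rle_trans with B; [apply HB, Ht | apply Rmax_r]. }
(* [compactness_list] only gives a doubly negated finite [d]-net of the square. *)
destruct (classic (exists M, forall x y, -1 <= x <= 1 -> -1 <= y <= 1 -> Rabs (f x y) <= M))
  as [|Hno]; [assumption | exfalso].
apply (compactness_list 2 (-1, (-1, tt)) (1, (1, tt)) (fun _ => d)); intros [l Hl].
destruct (Hbound l) as [B HB]; apply Hno; exists (B + 1); intros x y Hx Hy.
destruct (Hl (x, (y, tt)) (conj Hx (conj Hy I))) as [[u [v []]] (Hin & Hb & Hc)].
simpl in Hb, Hc; destruct Hb as (Hu & Hv & _), Hc as (Hcu & Hcv & _).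
assert (Hfu := Hd u v x y Hu Hv Hx Hy Hcu Hcv); simpl in Hfu.
assert (Hsize := HB _ Hin); simpl in Hsize.
pose proof (Rabs_triang_inv (f x y) (f u v)); lra.
Qed.

Lemma bounded_upto (F : list bool -> fn2) n :
  (forall l, exists M, forall s t, Rabs (F l s t) <= M) ->
  exists M, forall l, (length l <= n)%nat -> forall s t, Rabs (F l s t) <= M.
Proof.
revert F; induction n as [|n IH]; intros F HF.
- destruct (HF nil) as [M HM]; exists M; intros [|b l] Hl; simpl in Hl; [exact HM | lia].
- destruct (HF nil) as [M0 H0].
  destruct (IH (fun l => F (true :: l))) as [M1 H1]; [intros; apply HF|].
  destruct (IH (fun l => F (false :: l))) as [M2 H2]; [intros; apply HF|].
  exists (Rmax M0 (Rmax M1 M2)); intros [|[] l] Hl s t; simpl in Hl.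
  + specialize (H0 s t); pose proof (Rmax_l M0 (Rmax M1 M2)); lra.
  + specialize (H1 l ltac:(lia) s t); pose proof (Rmax_r M0 (Rmax M1 M2));
      pose proof (Rmax_l M1 M2); lra.
  + specialize (H2 l ltac:(lia) s t); pose proof (Rmax_r M0 (Rmax M1 M2));
      pose proof (Rmax_r M1 M2); lra.
Qed.

Lemma Rabs_le_nrm_l x y : Rabs x <= nrm x y.
Proof. unfold nrm; rewrite <- sqrt_Rsqr_abs; apply sqrt_le_1_alt; unfold Rsqr; nra. Qed.

Lemma Rabs_le_nrm_r x y : Rabs y <= nrm x y.
Proof. unfold nrm; rewrite <- sqrt_Rsqr_abs; apply sqrt_le_1_alt; unfold Rsqr; nra. Qed.

Lemma nrm_scale x y e : 0 < e -> nrm (x / e) (y / e) = nrm x y / e.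
Proof.
intros He; unfold nrm.
replace ((x / e) ^ 2 + (y / e) ^ 2) with ((x ^ 2 + y ^ 2) * (/ e) ^ 2) by (field; lra).
rewrite sqrt_mult_alt, sqrt_pow2 by (nra || (left; apply Rinv_0_lt_compat; lra)).
reflexivity.
Qed.

Definition outside_unit_square (s t : R) : Prop := 1 < Rabs s \/ 1 < Rabs t.

Lemma open2_outside_unit_square : open2 outside_unit_square.
Proof.
assert (Hfar : forall z w, 1 < Rabs z -> Rabs (w - z) < Rabs z - 1 -> 1 < Rabs w).
{ intros z w Hz Hw; pose proof (Rabs_triang_inv z (z - w)).
  rewrite Rabs_minus_sym in Hw; replace (z - (z - w)) with w in * by ring; lra. }
intros s t [Hs | Ht].
- assert (Hr : 0 < Rabs s - 1) by lra.
  exists (mkposreal _ Hr); intros u v hu _; left; exact (Hfar s u Hs hu).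
- assert (Hr : 0 < Rabs t - 1) by lra.
  exists (mkposreal _ Hr); intros u v _ hv; right; exact (Hfar t v Ht hv).
Qed.

Lemma cutoff_zero_outside_square chi :
  (exists r, r < 1 /\ forall x y, r <= nrm x y -> chi x y = 0) ->
  forall s t, outside_unit_square s t -> chi s t = 0.
Proof.
intros (r & Hr & Hchi) s t [Hs | Ht]; apply Hchi.
- pose proof (Rabs_le_nrm_l s t); lra.
- pose proof (Rabs_le_nrm_r s t); lra.
Qed.

Definition profile (chi : fn2) (a b : R) : fn2 :=
  fun s t => chi s t * (a * s ^ 2 + b * t ^ 2).

Lemma smooth_profile chi a b : smooth chi -> smooth (profile chi a b).
Proof.
intros Hchi; apply smooth_mult; [exact Hchi|].
apply (smooth_ext (quad_poly 0 0 0 a 0 b)); [intros; unfold quad_poly; ring|].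
apply smooth_quad_poly.
Qed.

Lemma iterD_zero l : iterD l (fun _ _ => 0) = fun _ _ => 0.
Proof.
induction l as [|b l IH]; simpl; [reflexivity|].
rewrite IH; destruct b; [apply dx_const | apply dy_const].
Qed.

Lemma iterD_profile_outside chi a b :
  (forall s t, outside_unit_square s t -> chi s t = 0) ->
  forall l s t, outside_unit_square s t -> iterD l (profile chi a b) s t = 0.
Proof.
intros Hchi l s t Hst.
rewrite (iterD_ext_open _ _ (fun _ _ => 0) open2_outside_unit_square) by
  (exact Hst || intros u v Huv; unfold profile; rewrite Hchi by exact Huv; ring).
now rewrite iterD_zero.
Qed.

Lemma profile_derivatives_bounded chi a b : smooth chi ->
  (forall s t, outside_unit_square s t -> chi s t = 0) ->
  exists M, forall l, (length l <= 2)%nat -> forall s t,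
    Rabs (iterD l (profile chi a b) s t) <= M.
Proof.
intros Hsm Hout; apply bounded_upto; intros l.
destruct (continuous_bounded_on_square (iterD l (profile chi a b))) as [M HM].
{ intros x y _ _; apply (smooth_profile chi a b Hsm l x y I). }
exists M; intros s t.
destruct (classic (outside_unit_square s t)) as [Hst | Hst].
- rewrite iterD_profile_outside by assumption; rewrite Rabs_R0.
  apply Rle_trans with (Rabs (iterD l (profile chi a b) 0 0)); [apply Rabs_pos|].
  apply HM; lra.
- unfold outside_unit_square in Hst; apply HM; apply Rabs_le_between; lra.
Qed.

Section Correction.
Variables (W : fn2) (M e : R).
Hypotheses (W_smooth : smooth W) (He : 0 < e <= 1)
  (W_bounded : forall l, (length l <= 2)%nat -> forall s t, Rabs (iterD l W s t) <= M).

Lemma iterD_rescale_bounded l : (length l <= 2)%nat ->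
  forall x y, Rabs (iterD l (rescale (e ^ 2) e W) x y) <= M.
Proof.
intros Hl x y; rewrite iterD_rescale by exact W_smooth; unfold rescale.
assert (Hc : 0 <= e ^ 2 * (/ e) ^ length l <= 1).
{ destruct (length l) as [|[|[|n]]]; [| | |lia]; simpl;
    [nra | replace (e * (e * 1) * (/ e * 1)) with e by (field; lra); lra |
     replace (e * (e * 1) * (/ e * (/ e * 1))) with 1 by (field; lra); lra]. }
rewrite Rabs_mult, (Rabs_pos_eq (e ^ 2 * _)) by lra.
specialize (W_bounded l Hl (x / e) (y / e)); pose proof (Rabs_pos (iterD l W (x / e) (y / e))).
nra.
Qed.

Lemma first_partials_rescale_small b x y :
  Rabs (iterD (b :: nil) (rescale (e ^ 2) e W) x y) <= e * M.
Proof.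
rewrite iterD_rescale by exact W_smooth; unfold rescale; simpl length.
replace (e ^ 2 * (/ e) ^ 1) with e by (field; lra).
rewrite Rabs_mult, (Rabs_pos_eq e) by lra.
apply Rmult_le_compat_l; [lra | apply W_bounded; simpl; lia].
Qed.

End Correction.

Lemma iterD_rescale_far W c e : 0 < e -> smooth W ->
  (forall l s t, outside_unit_square s t -> iterD l W s t = 0) ->
  forall l x y, e < Rabs x -> iterD l (rescale c e W) x y = 0.
Proof.
intros He HW Hout l x y Hx; rewrite iterD_rescale by assumption; unfold rescale.
rewrite Hout; [ring | left].
unfold Rdiv; rewrite Rabs_mult, Rabs_inv, (Rabs_pos_eq e) by lra.
apply (Rmult_lt_reg_r e); [lra|]; field_simplify; lra.
Qed.

(** * W^{2,1} densities and integrals over a strip *)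

Lemma W21_dens_comp_ext_open U u v : open2 U -> (forall x y, U x y -> u x y = v x y) ->
  forall x y, U x y -> W21_dens_comp u x y = W21_dens_comp v x y.
Proof.
intros HU Huv x y Hxy.
assert (E := fun l => iterD_ext_open U u v HU Huv l x y Hxy).
pose proof (E nil); pose proof (E (true :: nil)); pose proof (E (false :: nil));
  pose proof (E (true :: true :: nil)); pose proof (E (false :: true :: nil));
  pose proof (E (true :: false :: nil)); pose proof (E (false :: false :: nil)).
cbn [iterD] in *; unfold W21_dens_comp; congruence.
Qed.

Lemma W21_dens_comp_le u M x y :
  (forall l, (length l <= 2)%nat -> Rabs (iterD l u x y) <= M) -> W21_dens_comp u x y <= 7 * M.
Proof.
intros H.
pose proof (H nil ltac:(simpl; lia)); pose proof (H (true :: nil) ltac:(simpl; lia));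
  pose proof (H (false :: nil) ltac:(simpl; lia));
  pose proof (H (true :: true :: nil) ltac:(simpl; lia));
  pose proof (H (false :: true :: nil) ltac:(simpl; lia));
  pose proof (H (true :: false :: nil) ltac:(simpl; lia));
  pose proof (H (false :: false :: nil) ltac:(simpl; lia)).
cbn [iterD] in *; unfold W21_dens_comp; lra.
Qed.

Lemma W21_dens_comp_nonneg u x y : 0 <= W21_dens_comp u x y.
Proof.
unfold W21_dens_comp.
repeat apply Rplus_le_le_0_compat; apply Rabs_pos.
Qed.

Lemma W21_dens_comp_flat u x y : (forall l, iterD l u x y = 0) -> W21_dens_comp u x y = 0.
Proof.
intros H.
pose proof (H nil); pose proof (H (true :: nil)); pose proof (H (false :: nil));
  pose proof (H (true :: true :: nil)); pose proof (H (false :: true :: nil));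
  pose proof (H (true :: false :: nil)); pose proof (H (false :: false :: nil)).
cbn [iterD] in *; unfold W21_dens_comp.
repeat match goal with E : _ = 0 |- _ => rewrite E; clear E end.
rewrite Rabs_R0; ring.
Qed.

Lemma continuity_W21_dens_comp u : smooth u -> forall x y, continuity_2d_pt (W21_dens_comp u) x y.
Proof.
intros Hu x y.
assert (Hc : forall l, continuity_2d_pt (fun a b => Rabs (iterD l u a b)) x y).
{ intros l; apply (continuity_1d_2d_pt_comp Rabs (iterD l u));
    [apply Rcontinuity_abs | apply (Hu l x y I)]. }
unfold W21_dens_comp; repeat apply continuity_2d_pt_plus;
  [exact (Hc nil) | exact (Hc (true :: nil)) | exact (Hc (false :: nil)) |
   exact (Hc (true :: true :: nil)) | exact (Hc (false :: true :: nil)) |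
   exact (Hc (true :: false :: nil)) | exact (Hc (false :: false :: nil))].
Qed.

Lemma ex_RInt_slice D c d x : (forall x y, continuity_2d_pt D x y) ->
  ex_RInt (fun y => D x y) c d.
Proof.
intros HD; apply (@ex_RInt_continuous R_CompleteNormedModule); intros y _.
apply filterlim_locally; intros eps; destruct (HD x y eps) as [r Hr].
exists r; intros t Ht; apply Hr; [rewrite Rminus_eq_0, Rabs_R0; apply cond_pos | exact Ht].
Qed.

Lemma continuous_RInt_param D c d : c <= d -> (forall x y, continuity_2d_pt D x y) ->
  forall x, continuous (fun x => RInt (fun y => D x y) c d) x.
Proof.
intros Hcd HD x; apply filterlim_locally; intros eps.
assert (Heps : 0 < eps / (d - c + 1)) by (apply Rdiv_lt_0_compat; [apply cond_pos | lra]).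
destruct (uniform_continuity_2d D (x - 1) (x + 1) c d (fun u v _ _ => HD u v)
  (mkposreal _ Heps)) as [r Hr]; simpl in Hr.
assert (Hr1 : 0 < Rmin r 1) by (apply Rmin_pos; [apply cond_pos | lra]).
exists (mkposreal _ Hr1); intros u Hu; change (Rabs (u - x) < Rmin r 1) in Hu.
change (Rabs (RInt (fun y => D u y) c d - RInt (fun y => D x y) c d) < eps).
pose proof (Rmin_l r 1); pose proof (Rmin_r r 1); apply Rabs_def2 in Hu.
rewrite <- (RInt_minus (fun y => D u y) (fun y => D x y)) by apply ex_RInt_slice, HD.
apply Rle_lt_trans with ((d - c) * (eps / (d - c + 1))).
- apply abs_RInt_le_const; [exact Hcd | |].
  + apply (ex_RInt_minus (fun y => D u y) (fun y => D x y)); apply ex_RInt_slice, HD.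
  + intros t Ht; left; apply Hr; try lra; [apply Rabs_def1; lra |].
    rewrite Rminus_eq_0, Rabs_R0; apply cond_pos.
- pose proof (cond_pos eps); apply (Rmult_lt_reg_r (d - c + 1)); [lra|].
  field_simplify; lra.
Qed.

Lemma RInt_zero_on f a b : a <= b -> (forall x, a < x < b -> f x = 0) -> RInt f a b = 0.
Proof.
intros Hab Hf; rewrite (RInt_ext f (fun _ => 0)).
- rewrite RInt_const; exact (Rmult_0_r (b - a)).
- intros x Hx; rewrite Rmin_left, Rmax_right in Hx by lra; auto.
Qed.

Lemma rect_integral_strip a b c d h D K e :
  a < b -> c < d -> d - c <= 1 -> a <= 0 <= b -> 0 < e ->
  (forall x y, a < x < b -> c < y < d -> h x y = D x y) ->
  (forall x y, continuity_2d_pt D x y) -> (forall x y, Rabs (D x y) <= K) ->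
  (forall x y, e < Rabs x -> D x y = 0) ->
  exists v, rect_integral a b c d h v /\ v <= 2 * e * K.
Proof.
intros Hab Hcd Hdc Ha0 He Hh HD HK Hfar.
assert (HK0 : 0 <= K) by (apply Rle_trans with (Rabs (D 0 0)); [apply Rabs_pos | apply HK]).
set (F := fun x => RInt (fun y => D x y) c d).
assert (HF : forall p q, ex_RInt F p q).
{ intros p q; apply (@ex_RInt_continuous R_CompleteNormedModule); intros x _.
  apply continuous_RInt_param; [lra | exact HD]. }
exists (RInt F a b); split; [split|].
- intros x Hx; apply (ex_RInt_ext (fun y => D x y)); [|apply ex_RInt_slice, HD].
  intros y Hy; rewrite Rmin_left, Rmax_right in Hy by lra; symmetry; apply Hh; lra.
- apply (is_RInt_ext F); [|apply RInt_correct, HF].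
  intros x Hx; rewrite Rmin_left, Rmax_right in Hx by lra; apply RInt_ext.
  intros y Hy; rewrite Rmin_left, Rmax_right in Hy by lra; symmetry; apply Hh; lra.
- set (s := Rmax a (- e)); set (t := Rmin b e).
  assert (Hs : a <= s /\ - e <= s /\ s <= 0 /\ (s = a \/ s = - e)).
  { unfold s; repeat split; [apply Rmax_l | apply Rmax_r | apply Rmax_lub; lra |].
    apply Rmax_case; auto. }
  assert (Ht : t <= b /\ t <= e /\ 0 <= t /\ (t = b \/ t = e)).
  { unfold t; repeat split; [apply Rmin_l | apply Rmin_r | apply Rmin_glb; lra |].
    apply Rmin_case; auto. }
  assert (Hzero : forall p q, p <= q -> (forall x, p < x < q -> e < Rabs x) -> RInt F p q = 0).
  { intros p q Hpq Hpq'; apply RInt_zero_on; [exact Hpq|]; intros x Hx.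
    apply RInt_zero_on; [lra|]; intros y _; apply Hfar, Hpq', Hx. }
  assert (Hsplit : RInt F a b = RInt F a s + RInt F s t + RInt F t b).
  { rewrite <- (RInt_Chasles F a t b), <- (RInt_Chasles F a s t) by apply HF.
    reflexivity. }
  rewrite Hsplit, (Hzero a s), (Hzero t b), Rplus_0_l, Rplus_0_r; try lra.
  + apply Rle_trans with ((t - s) * ((d - c) * K)).
    * apply Rle_trans with (Rabs (RInt F s t)); [apply Rle_abs|].
      apply abs_RInt_le_const; [lra | apply HF |]; intros x _.
      apply abs_RInt_le_const; [lra | apply ex_RInt_slice, HD | intros; apply HK].
    * assert ((d - c) * K <= K) by nra; nra.
  + intros x Hx; rewrite Rabs_pos_eq; lra.
  + intros x Hx; rewrite Rabs_left; lra.
Qed.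

(* [g_eps] without its case split on [nrm x y < e], which is harmless because
   [chi (x / e) (y / e)] vanishes when [e <= nrm x y] (see [g_eps_components]). *)
Definition blend (chi f P : fn2) (e : R) : fn2 :=
  fun x y => f x y + chi (x / e) (y / e) * (P x y - f x y).

Lemma cutoff_rescaled_zero chi e x y :
  (exists r, r < 1 /\ forall x y, r <= nrm x y -> chi x y = 0) ->
  0 < e -> e <= nrm x y -> chi (x / e) (y / e) = 0.
Proof.
intros (r & Hr & Hchi) He Hxy; apply Hchi; rewrite nrm_scale by exact He.
apply (Rmult_le_reg_r e); [lra|]; field_simplify; [nra | lra].
Qed.

Lemma g_eps_components g P chi e :
  (exists r, r < 1 /\ forall x y, r <= nrm x y -> chi x y = 0) -> 0 < e ->
  cmp1 (g_eps g P chi e) = blend chi (cmp1 g) (cmp1 P) e /\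
  cmp2 (g_eps g P chi e) = blend chi (cmp2 g) (cmp2 P) e.
Proof.
intros Hsupp He; split; apply functional_extensionality; intro x;
  apply functional_extensionality; intro y; unfold cmp1, cmp2, g_eps, blend;
  destruct (Rlt_dec (nrm x y) e); simpl; try ring;
  rewrite (cutoff_rescaled_zero chi e x y) by (assumption || lra); ring.
Qed.

Lemma C1_on_blend U chi f P e : open2 U -> smooth chi -> 0 < e ->
  C1_on U f -> C1_on U P -> C1_on U (blend chi f P e).
Proof.
intros HU Hchi He Hf HP; apply C1_on_plus; [exact HU | exact Hf|].
apply C1_on_mult; [exact HU | | apply C1_on_minus; assumption].
apply (C1_on_ext_open U _ (rescale 1 e chi) HU); [intros; unfold rescale; ring|].
apply (smooth_C1_on U nil), smooth_rescale; assumption.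
Qed.

Definition sub_squares (P : fn2) (a b : R) : fn2 :=
  fun x y => P x y - (a * x ^ 2 + b * y ^ 2).

Lemma smooth_sub_squares P a b : smooth P -> smooth (sub_squares P a b).
Proof.
intros HP; apply (smooth_ext (fun x y => P x y + quad_poly 0 0 0 (- a) 0 (- b) x y));
  [intros; unfold sub_squares, quad_poly; ring|].
apply smooth_plus; [exact HP | apply smooth_quad_poly].
Qed.

Section Piece.
Variables (chi f P : fn2) (U : R -> R -> Prop) (a b : R).
Hypotheses (chi_smooth : smooth chi) (P_smooth : smooth P) (U_open : open2 U)
  (f_on_U : forall x y, U x y -> f x y = sub_squares P a b x y).

Lemma blend_on_piece e : 0 < e -> forall x y, U x y ->
  blend chi f P e x y = sub_squares P a b x y + rescale (e ^ 2) e (profile chi a b) x y.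
Proof.
intros He x y Hxy; unfold blend, rescale, profile; rewrite f_on_U by exact Hxy.
unfold sub_squares; field; lra.
Qed.

Lemma smooth_piece_model e : 0 < e ->
  smooth (fun x y => sub_squares P a b x y + rescale (e ^ 2) e (profile chi a b) x y).
Proof.
intros He; apply smooth_plus; [apply smooth_sub_squares, P_smooth|].
apply smooth_rescale; [exact He | apply smooth_profile, chi_smooth].
Qed.

Lemma Cinf_on_blend_piece e : 0 < e -> Cinf_on U (blend chi f P e).
Proof.
intros He l; apply (C1_on_ext_open U _ (iterD l (fun x y =>
  sub_squares P a b x y + rescale (e ^ 2) e (profile chi a b) x y)) U_open).
- apply iterD_ext_open; [exact U_open | now apply blend_on_piece].
- apply smooth_C1_on, smooth_piece_model, He.
Qed.

Lemma partials_blend_sub_piece e : 0 < e -> forall l x y, U x y ->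
  iterD l (blend chi f P e) x y - iterD l f x y =
  iterD l (rescale (e ^ 2) e (profile chi a b)) x y.
Proof.
intros He l x y Hxy.
rewrite (iterD_ext_open U _ _ U_open (blend_on_piece e He)) by exact Hxy.
rewrite (iterD_ext_open U _ _ U_open f_on_U) by exact Hxy.
rewrite iterD_plus; [ring | apply smooth_sub_squares, P_smooth |].
apply smooth_rescale; [exact He | apply smooth_profile, chi_smooth].
Qed.

Lemma W21_blend_piece e : 0 < e -> forall x y, U x y ->
  W21_dens_comp (fun u v => blend chi f P e u v - f u v) x y =
  W21_dens_comp (rescale (e ^ 2) e (profile chi a b)) x y.
Proof.
intros He; apply W21_dens_comp_ext_open; [exact U_open|].
intros x y Hxy; rewrite (blend_on_piece e He x y Hxy), f_on_U by exact Hxy; ring.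
Qed.

Lemma first_partials_bounded_piece : exists B, forall d x y, U x y ->
  -1 <= x <= 1 -> -1 <= y <= 1 -> Rabs (iterD (d :: nil) f x y) <= B.
Proof.
assert (Hs := smooth_sub_squares P a b P_smooth).
destruct (continuous_bounded_on_square (iterD (true :: nil) (sub_squares P a b))) as [B1 H1];
  [intros x y _ _; apply (Hs _ x y I)|].
destruct (continuous_bounded_on_square (iterD (false :: nil) (sub_squares P a b))) as [B2 H2];
  [intros x y _ _; apply (Hs _ x y I)|].
exists (Rmax B1 B2); intros d x y Hxy Hx Hy.
rewrite (iterD_ext_open U _ _ U_open f_on_U) by exact Hxy.
destruct d; [apply Rle_trans with B1; [now apply H1 | apply Rmax_l] |
             apply Rle_trans with B2; [now apply H2 | apply Rmax_r]].
Qed.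

End Piece.

(** * The mollified map *)

Definition quadrants : list (R -> R -> Prop) := Q1 :: Q2 :: Q3 :: Q4 :: nil.

Lemma open2_quadrant U : In U quadrants -> open2 U.
Proof.
intros [<- | [<- | [<- | [<- | []]]]];
  [exact (open2_rect 0 1 0 1) | exact (open2_rect (-1) 0 0 1) |
   exact (open2_rect (-1) 0 (-1) 0) | exact (open2_rect 0 1 (-1) 0)].
Qed.

Lemma quadrant_in_square U x y : In U quadrants -> U x y -> -1 <= x <= 1 /\ -1 <= y <= 1.
Proof. intros [<- | [<- | [<- | [<- | []]]]]; unfold Q1, Q2, Q3, Q4; lra. Qed.

Lemma Qunion_quadrants x y : Qunion x y <-> exists U, In U quadrants /\ U x y.
Proof.
split.
- intros [H | [H | [H | H]]]; eexists; split; [| exact H | | exact H | | exact H | | exact H];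
    simpl; tauto.
- intros (U & [<- | [<- | [<- | [<- | []]]]] & H); unfold Qunion; tauto.
Qed.

Lemma uniform_over_list {A : Type} (L : list A) (Pr : A -> R -> Prop) :
  (forall a M M', Pr a M -> M <= M' -> Pr a M') ->
  (forall a, In a L -> exists M, Pr a M) -> exists M, forall a, In a L -> Pr a M.
Proof.
intros Hmono; induction L as [|a L IH]; intros HL; [exists 0; intros a []|].
destruct (HL a (or_introl eq_refl)) as [Ma Ha].
destruct IH as [ML HML]; [intros a' Ha'; apply HL; right; exact Ha'|].
exists (Rmax Ma ML); intros a' [<- | Ha'].
- apply (Hmono a Ma); [exact Ha | apply Rmax_l].
- apply (Hmono a' ML); [apply HML, Ha' | apply Rmax_r].
Qed.

Lemma det_perturb A B C D A' B' C' D' M K e lam :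
  Rabs A <= M -> Rabs B <= M -> Rabs C <= M -> Rabs D <= M ->
  Rabs (A' - A) <= K * e -> Rabs (B' - B) <= K * e ->
  Rabs (C' - C) <= K * e -> Rabs (D' - D) <= K * e ->
  0 < e <= 1 -> lam <= A * D - B * C -> (4 * M * K + 2 * K * K) * e <= lam / 2 ->
  lam / 2 <= A' * D' - B' * C'.
Proof.
intros hA hB hC hD hA' hB' hC' hD' he hlam hsmall.
assert (hK : 0 <= K) by (pose proof (Rabs_pos (A' - A)); nra).
assert (Hprod : forall u v U V, Rabs u <= U -> Rabs v <= V -> - (U * V) <= u * v <= U * V).
{ intros u v U V hu hv; apply Rabs_le_between; rewrite Rabs_mult.
  apply Rmult_le_compat; auto using Rabs_pos. }
pose proof (Hprod _ _ _ _ hA hD'); pose proof (Hprod _ _ _ _ hA' hD);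
  pose proof (Hprod _ _ _ _ hA' hD'); pose proof (Hprod _ _ _ _ hB hC');
  pose proof (Hprod _ _ _ _ hB' hC); pose proof (Hprod _ _ _ _ hB' hC').
assert (K * e * (K * e) <= K * K * e) by (assert (0 <= K * K) by nra; nra).
replace (A' * D' - B' * C') with (A * D - B * C + (A * (D' - D) + (A' - A) * D
  + (A' - A) * (D' - D)) - (B * (C' - C) + (B' - B) * C + (B' - B) * (C' - C))) by ring.
nra.
Qed.

(* [comp fst] and [comp snd] are [cmp1] and [cmp2] up to conversion. *)
Definition comp (pr : R * R -> R) (h : map2) : fn2 := fun x y => pr (h x y).

Definition coordinate (pr : R * R -> R) : Prop := pr = fst \/ pr = snd.

Lemma poly_comp pr P : coordinate pr -> is_poly_map_deg_le2 P -> is_poly_deg_le2 (comp pr P).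
Proof. intros [-> | ->] [H1 H2]; assumption. Qed.

Lemma C1_on_comp pr U G : coordinate pr -> C1_map_on U G -> C1_on U (comp pr G).
Proof. intros [-> | ->] [H1 H2]; assumption. Qed.

Section Smoothing.
Variables (g G P1 P2 P3 P4 : map2) (chi : fn2).
Hypotheses
  (P1_poly : is_poly_map_deg_le2 P1) (P2_poly : is_poly_map_deg_le2 P2)
  (P3_poly : is_poly_map_deg_le2 P3) (P4_poly : is_poly_map_deg_le2 P4)
  (g_Q1 : forall x y, Q1 x y -> g x y = P1 x y) (g_Q2 : forall x y, Q2 x y -> g x y = P2 x y)
  (g_Q3 : forall x y, Q3 x y -> g x y = P3 x y) (g_Q4 : forall x y, Q4 x y -> g x y = P4 x y)
  (G_C1 : C1_map_on Sq G) (G_ext : forall x y, Qunion x y -> G x y = g x y)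
  (chi_smooth : smooth chi)
  (chi_supp : exists r, r < 1 /\ forall x y, r <= nrm x y -> chi x y = 0)
  (chi_one : forall x y, nrm x y < 1 / 2 -> chi x y = 1).

Let chi_out : forall s t, outside_unit_square s t -> chi s t = 0 :=
  cutoff_zero_outside_square chi chi_supp.

Lemma comp_pieces pr U : coordinate pr -> In U quadrants ->
  exists a b, forall x y, U x y -> comp pr g x y = sub_squares (comp pr P1) a b x y.
Proof.
intros Hpr.
assert (HG : forall Q P, (forall x y, Q x y -> Qunion x y) ->
  (forall x y, Q x y -> g x y = P x y) -> forall x y, Q x y -> comp pr G x y = comp pr P x y).
{ intros Q P HQ Hg x y Hxy; unfold comp; rewrite G_ext, Hg; auto. }
destruct (C1_quadrant_polys (comp pr G) (comp pr P1) (comp pr P2) (comp pr P3) (comp pr P4))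
  as (D2 & D3 & D4); auto using C1_on_comp, poly_comp;
  try (apply HG; [unfold Qunion; tauto | assumption]).
assert (Hpiece : forall Q P, (forall x y, Q x y -> g x y = P x y) ->
  differ_by_squares (comp pr P1) (comp pr P) ->
  exists a b, forall x y, Q x y -> comp pr g x y = sub_squares (comp pr P1) a b x y).
{ intros Q P Hg (a & b & D); exists a, b; intros x y Hxy.
  unfold sub_squares; rewrite <- D; unfold comp; rewrite Hg by exact Hxy; ring. }
intros [<- | [<- | [<- | [<- | []]]]];
  [apply (Hpiece _ P1) | apply (Hpiece _ P2) | apply (Hpiece _ P3) | apply (Hpiece _ P4)]; auto.
exists 0, 0; intros x y; ring.
Qed.

Lemma comp_Cinf_on pr e U : coordinate pr -> 0 < e -> In U quadrants ->
  Cinf_on U (blend chi (comp pr g) (comp pr P1) e).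
Proof.
intros Hpr He HU; destruct (comp_pieces pr U Hpr HU) as (a & b & Hab).
apply (Cinf_on_blend_piece chi _ _ U a b); auto using open2_quadrant.
apply smooth_poly_deg_le2, poly_comp; assumption.
Qed.

Lemma comp_partials_close pr : coordinate pr -> exists C, forall e, 0 < e <= 1 ->
  forall x y, Qunion x y -> forall d,
  Rabs (iterD (d :: nil) (blend chi (comp pr g) (comp pr P1) e) x y
        - iterD (d :: nil) (comp pr g) x y) <= C * e.
Proof.
intros Hpr.
destruct (uniform_over_list quadrants (fun U C => forall e, 0 < e <= 1 -> forall x y, U x y ->
  forall d, Rabs (iterD (d :: nil) (blend chi (comp pr g) (comp pr P1) e) x y
                  - iterD (d :: nil) (comp pr g) x y) <= C * e)) as [C HC].
- intros U M M' HM HMM' e He x y Hxy d; apply Rle_trans with (M * e); [auto | nra].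
- intros U HU; destruct (comp_pieces pr U Hpr HU) as (a & b & Hab).
  destruct (profile_derivatives_bounded chi a b chi_smooth chi_out) as [M HM].
  exists M; intros e He x y Hxy d.
  rewrite (partials_blend_sub_piece chi _ _ U a b) by
    (auto using open2_quadrant, smooth_poly_deg_le2, poly_comp; lra).
  rewrite Rmult_comm; apply first_partials_rescale_small; auto using smooth_profile.
- exists C; intros e He x y Hxy; apply Qunion_quadrants in Hxy as (U & HU & Hxy).
  exact (HC U HU e He x y Hxy).
Qed.

Lemma comp_partials_bounded pr : coordinate pr -> exists B, forall x y, Qunion x y ->
  forall d, Rabs (iterD (d :: nil) (comp pr g) x y) <= B.
Proof.
intros Hpr.
destruct (uniform_over_list quadrants (fun U B => forall x y, U x y ->
  forall d, Rabs (iterD (d :: nil) (comp pr g) x y) <= B)) as [B HB].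
- intros U M M' HM HMM' x y Hxy d; apply Rle_trans with M; auto.
- intros U HU; destruct (comp_pieces pr U Hpr HU) as (a & b & Hab).
  destruct (first_partials_bounded_piece (comp pr g) (comp pr P1) U a b) as [B HB];
    auto using open2_quadrant, smooth_poly_deg_le2, poly_comp.
  exists B; intros x y Hxy d; destruct (quadrant_in_square U x y HU Hxy); auto.
- exists B; intros x y Hxy; apply Qunion_quadrants in Hxy as (U & HU & Hxy).
  exact (HB U HU x y Hxy).
Qed.

Lemma comp_W21_density pr : coordinate pr -> exists K, forall e, 0 < e <= 1 ->
  forall U, In U quadrants ->
  exists D, (forall x y, continuity_2d_pt D x y) /\ (forall x y, Rabs (D x y) <= K) /\
    (forall x y, e < Rabs x -> D x y = 0) /\
    (forall x y, U x y -> W21_dens_comp (fun u v =>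
       blend chi (comp pr g) (comp pr P1) e u v - comp pr g u v) x y = D x y).
Proof.
intros Hpr.
destruct (uniform_over_list quadrants (fun U K => forall e, 0 < e <= 1 ->
  exists D, (forall x y, continuity_2d_pt D x y) /\ (forall x y, Rabs (D x y) <= K) /\
    (forall x y, e < Rabs x -> D x y = 0) /\
    (forall x y, U x y -> W21_dens_comp (fun u v =>
       blend chi (comp pr g) (comp pr P1) e u v - comp pr g u v) x y = D x y)))
  as [K HK].
- intros U M M' HM HMM' e He; destruct (HM e He) as (D & H1 & H2 & H3 & H4).
  exists D; repeat split; auto; intros x y; apply Rle_trans with M; auto.
- intros U HU; destruct (comp_pieces pr U Hpr HU) as (a & b & Hab).
  assert (HW := smooth_profile chi a b chi_smooth).
  destruct (profile_derivatives_bounded chi a b chi_smooth chi_out) as [M HM].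
  exists (7 * M); intros e He.
  exists (W21_dens_comp (rescale (e ^ 2) e (profile chi a b))); repeat split.
  + apply continuity_W21_dens_comp, smooth_rescale; [lra | exact HW].
  + intros x y; rewrite Rabs_pos_eq by apply W21_dens_comp_nonneg.
    apply W21_dens_comp_le; intros l Hl; apply iterD_rescale_bounded; auto.
  + intros x y Hx; apply W21_dens_comp_flat; intros l.
    apply iterD_rescale_far; [lra | exact HW | | exact Hx].
    apply iterD_profile_outside, chi_out.
  + apply (W21_blend_piece chi _ _ U a b);
      auto using open2_quadrant, smooth_poly_deg_le2, poly_comp; lra.
- exists K; intros e He U HU; exact (HK U HU e He).
Qed.

Lemma g_eps_blend e : 0 < e -> forall x y,
  g_eps g P1 chi e x y = (blend chi (cmp1 g) (cmp1 P1) e x y, blend chi (cmp2 g) (cmp2 P1) e x y).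
Proof.
intros He x y; destruct (g_eps_components g P1 chi e chi_supp He) as [E1 E2].
rewrite <- E1, <- E2; apply surjective_pairing.
Qed.

Lemma g_eps_comp pr e : coordinate pr -> 0 < e ->
  comp pr (g_eps g P1 chi e) = blend chi (comp pr g) (comp pr P1) e.
Proof.
intros [-> | ->] He;
  [exact (proj1 (g_eps_components g P1 chi e chi_supp He)) |
   exact (proj2 (g_eps_components g P1 chi e chi_supp He))].
Qed.

Lemma g_eps_regular e : 0 < e ->
  C1_map_on Qunion (g_eps g P1 chi e) /\
  (exists G', C1_map_on Sq G' /\ forall x y, Qunion x y -> G' x y = g_eps g P1 chi e x y) /\
  Cinf_map_on Q1 (g_eps g P1 chi e) /\ Cinf_map_on Q2 (g_eps g P1 chi e) /\
  Cinf_map_on Q3 (g_eps g P1 chi e) /\ Cinf_map_on Q4 (g_eps g P1 chi e).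
Proof.
intros He.
assert (Hfst : coordinate fst) by (left; reflexivity).
assert (Hsnd : coordinate snd) by (right; reflexivity).
assert (HCinf : forall pr U, coordinate pr -> In U quadrants ->
  Cinf_on U (comp pr (g_eps g P1 chi e))).
{ intros pr U Hpr HU; rewrite g_eps_comp by assumption; apply comp_Cinf_on; assumption. }
assert (HQ : forall U, In U quadrants -> Cinf_map_on U (g_eps g P1 chi e)).
{ intros U HU; split; [exact (HCinf fst U Hfst HU) | exact (HCinf snd U Hsnd HU)]. }
refine (conj _ (conj _ (conj (HQ Q1 _) (conj (HQ Q2 _) (conj (HQ Q3 _) (HQ Q4 _))))));
  try (simpl; tauto).
- split; intros x y Hxy; apply Qunion_quadrants in Hxy as (U & HU & Hxy);
    [exact (HCinf fst U Hfst HU nil x y Hxy) | exact (HCinf snd U Hsnd HU nil x y Hxy)].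
- exists (fun x y => (blend chi (cmp1 G) (cmp1 P1) e x y, blend chi (cmp2 G) (cmp2 P1) e x y)).
  split; [split|].
  + apply (C1_on_blend Sq chi (comp fst G) (comp fst P1) e (open2_rect (-1) 1 (-1) 1));
      auto using C1_on_comp.
    exact (smooth_C1_on Sq nil _ (smooth_poly_deg_le2 _ (poly_comp fst P1 Hfst P1_poly))).
  + apply (C1_on_blend Sq chi (comp snd G) (comp snd P1) e (open2_rect (-1) 1 (-1) 1));
      auto using C1_on_comp.
    exact (smooth_C1_on Sq nil _ (smooth_poly_deg_le2 _ (poly_comp snd P1 Hsnd P1_poly))).
  + intros x y Hxy; rewrite g_eps_blend by exact He.
    unfold blend, cmp1, cmp2; rewrite G_ext by exact Hxy; reflexivity.
Qed.

Lemma g_eps_near_far e : 0 < e ->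
  (forall x y, nrm x y < e / 2 -> g_eps g P1 chi e x y = P1 x y) /\
  (forall x y, e <= nrm x y -> g_eps g P1 chi e x y = g x y).
Proof.
intros He; split; intros x y Hxy; unfold g_eps; destruct (Rlt_dec (nrm x y) e); try lra.
- rewrite chi_one; [destruct (P1 x y); simpl; f_equal; ring|].
  rewrite nrm_scale by exact He; apply (Rmult_lt_reg_r e); [lra|]; field_simplify; lra.
- reflexivity.
Qed.

Lemma g_eps_W21_rect : exists K, 0 <= K /\ forall e, 0 < e <= 1 ->
  forall a b c d, In (rect a b c d) quadrants -> b - a = 1 -> d - c = 1 -> a <= 0 <= b ->
  exists v, rect_integral a b c d (W21_dens (g_eps g P1 chi e) g) v /\ v <= 2 * e * K.
Proof.
destruct (comp_W21_density fst (or_introl eq_refl)) as [K1 HK1].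
destruct (comp_W21_density snd (or_intror eq_refl)) as [K2 HK2].
exists (Rmax (K1 + K2) 0); split; [apply Rmax_r|]; intros e He a b c d HU Hab Hcd Ha0.
destruct (HK1 e He _ HU) as (D1 & c1 & b1 & z1 & E1).
destruct (HK2 e He _ HU) as (D2 & c2 & b2 & z2 & E2).
apply (rect_integral_strip a b c d _ (fun x y => D1 x y + D2 x y)); try lra.
- intros x y Hx Hy; unfold W21_dens.
  destruct (g_eps_components g P1 chi e chi_supp ltac:(lra)) as [-> ->].
  f_equal; [apply E1 | apply E2]; split; assumption.
- intros x y; apply continuity_2d_pt_plus; auto.
- intros x y; pose proof (Rabs_triang (D1 x y) (D2 x y)); specialize (b1 x y);
    specialize (b2 x y); pose proof (Rmax_l (K1 + K2) 0); lra.
- intros x y Hx; rewrite z1, z2 by exact Hx; ring.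
Qed.

Lemma g_eps_W21_conv : W21_conv (g_eps g P1 chi) g.
Proof.
destruct g_eps_W21_rect as (K & HK0 & HK); intros eta Heta.
assert (Hdelta : 0 < eta / (8 * K + 1)) by (apply Rdiv_lt_0_compat; lra).
exists (Rmin 1 (eta / (8 * K + 1))); split; [apply Rmin_pos; lra|]; intros e He.
pose proof (Rmin_l 1 (eta / (8 * K + 1))); pose proof (Rmin_r 1 (eta / (8 * K + 1))).
assert (He1 : 0 < e <= 1) by lra.
destruct (HK e He1 0 1 0 1 (or_introl eq_refl) ltac:(lra) ltac:(lra) ltac:(lra))
  as (v1 & I1 & J1).
destruct (HK e He1 (-1) 0 0 1 (or_intror (or_introl eq_refl)) ltac:(lra) ltac:(lra) ltac:(lra))
  as (v2 & I2 & J2).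
destruct (HK e He1 (-1) 0 (-1) 0 (or_intror (or_intror (or_introl eq_refl)))
  ltac:(lra) ltac:(lra) ltac:(lra)) as (v3 & I3 & J3).
destruct (HK e He1 0 1 (-1) 0 (or_intror (or_intror (or_intror (or_introl eq_refl))))
  ltac:(lra) ltac:(lra) ltac:(lra)) as (v4 & I4 & J4).
exists v1, v2, v3, v4; repeat (split; [assumption|]).
assert (e * (8 * K + 1) < eta).
{ apply Rlt_le_trans with (eta / (8 * K + 1) * (8 * K + 1));
    [apply Rmult_lt_compat_r; lra | right; field; lra]. }
lra.
Qed.

Lemma g_eps_partials_close : exists C, forall e, 0 < e <= 1 -> forall x y, Qunion x y ->
  Rabs (dx (cmp1 (g_eps g P1 chi e)) x y - dx (cmp1 g) x y) <= C * e /\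
  Rabs (dy (cmp1 (g_eps g P1 chi e)) x y - dy (cmp1 g) x y) <= C * e /\
  Rabs (dx (cmp2 (g_eps g P1 chi e)) x y - dx (cmp2 g) x y) <= C * e /\
  Rabs (dy (cmp2 (g_eps g P1 chi e)) x y - dy (cmp2 g) x y) <= C * e.
Proof.
destruct (comp_partials_close fst (or_introl eq_refl)) as [C1 HC1].
destruct (comp_partials_close snd (or_intror eq_refl)) as [C2 HC2].
exists (Rmax C1 C2); intros e He x y Hxy.
destruct (g_eps_components g P1 chi e chi_supp ltac:(lra)) as [-> ->].
assert (Hmax : forall C u, u <= C * e -> C <= Rmax C1 C2 -> u <= Rmax C1 C2 * e) by
  (intros; apply Rle_trans with (C * e); [assumption | apply Rmult_le_compat_r; lra]).
repeat split.
- apply (Hmax C1); [exact (HC1 e He x y Hxy true) | apply Rmax_l].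
- apply (Hmax C1); [exact (HC1 e He x y Hxy false) | apply Rmax_l].
- apply (Hmax C2); [exact (HC2 e He x y Hxy true) | apply Rmax_r].
- apply (Hmax C2); [exact (HC2 e He x y Hxy false) | apply Rmax_r].
Qed.

Lemma g_eps_jac_det lambda : 0 < lambda ->
  (forall x y, Qunion x y -> lambda <= jac_det g x y) ->
  exists eps0, 0 < eps0 /\ forall e, 0 < e < eps0 -> forall x y, Qunion x y ->
    lambda / 2 <= jac_det (g_eps g P1 chi e) x y.
Proof.
intros Hlam Hdet.
destruct g_eps_partials_close as [C HC].
destruct (comp_partials_bounded fst (or_introl eq_refl)) as [B1 HB1].
destruct (comp_partials_bounded snd (or_intror eq_refl)) as [B2 HB2].
set (B := Rmax (Rmax B1 B2) 0); set (K := Rmax C 0); set (q := 4 * B * K + 2 * K * K).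
assert (HB : B1 <= B /\ B2 <= B /\ 0 <= B).
{ unfold B; pose proof (Rmax_l (Rmax B1 B2) 0); pose proof (Rmax_r (Rmax B1 B2) 0).
  pose proof (Rmax_l B1 B2); pose proof (Rmax_r B1 B2); lra. }
assert (HK : C <= K /\ 0 <= K) by (split; [apply Rmax_l | apply Rmax_r]).
assert (Hq : 0 <= q) by (unfold q; nra).
assert (Heps0 : 0 < lambda / (2 * (q + 1))) by (apply Rdiv_lt_0_compat; lra).
exists (Rmin 1 (lambda / (2 * (q + 1)))); split; [apply Rmin_pos; lra|].
intros e He x y Hxy.
pose proof (Rmin_l 1 (lambda / (2 * (q + 1)))); pose proof (Rmin_r 1 (lambda / (2 * (q + 1)))).
destruct (HC e ltac:(lra) x y Hxy) as (h1 & h2 & h3 & h4).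
assert (HCK : C * e <= K * e) by (apply Rmult_le_compat_r; lra).
assert (b1 : Rabs (dx (cmp1 g) x y) <= B1) by exact (HB1 x y Hxy true).
assert (b2 : Rabs (dy (cmp1 g) x y) <= B1) by exact (HB1 x y Hxy false).
assert (b3 : Rabs (dx (cmp2 g) x y) <= B2) by exact (HB2 x y Hxy true).
assert (b4 : Rabs (dy (cmp2 g) x y) <= B2) by exact (HB2 x y Hxy false).
unfold jac_det; apply (det_perturb (dx (cmp1 g) x y) (dy (cmp1 g) x y) (dx (cmp2 g) x y)
  (dy (cmp2 g) x y) _ _ _ _ B K e); try lra.
- exact (Hdet x y Hxy).
- change (4 * B * K + 2 * K * K) with q; apply Rle_trans with ((q + 1) * e); [nra|].
  replace (lambda / 2) with ((q + 1) * (lambda / (2 * (q + 1)))) by (field; lra).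
  apply Rmult_le_compat_l; lra.
Qed.

End Smoothing.

Theorem proposition4p2
  (g P1 P2 P3 P4 : map2) (lambda : R) (chi : fn2)
  (hP : is_poly_map_deg_le2 P1 /\ is_poly_map_deg_le2 P2 /\
        is_poly_map_deg_le2 P3 /\ is_poly_map_deg_le2 P4)
  (hg : (forall x y, Q1 x y -> g x y = P1 x y) /\
        (forall x y, Q2 x y -> g x y = P2 x y) /\
        (forall x y, Q3 x y -> g x y = P3 x y) /\
        (forall x y, Q4 x y -> g x y = P4 x y))
  (hC1 : exists G : map2, C1_map_on Sq G /\
           forall x y, Qunion x y -> G x y = g x y)
  (hlam : 0 < lambda)
  (hdet : forall x y, Qunion x y -> lambda <= jac_det g x y)
  (hchi : is_cutoff chi) :
  (* (i) *)
  (forall eps, 0 < eps < 1 ->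
     C1_map_on Qunion (g_eps g P1 chi eps) /\
     (exists G : map2, C1_map_on Sq G /\
        forall x y, Qunion x y -> G x y = g_eps g P1 chi eps x y) /\
     Cinf_map_on Q1 (g_eps g P1 chi eps) /\ Cinf_map_on Q2 (g_eps g P1 chi eps) /\
     Cinf_map_on Q3 (g_eps g P1 chi eps) /\ Cinf_map_on Q4 (g_eps g P1 chi eps)) /\
  (* (ii) *)
  (forall eps, 0 < eps < 1 ->
     (forall x y, Qunion x y -> nrm x y < eps / 2 -> g_eps g P1 chi eps x y = P1 x y) /\
     (forall x y, Qunion x y -> eps <= nrm x y -> g_eps g P1 chi eps x y = g x y)) /\
  (* (iii) *)
  W21_conv (g_eps g P1 chi) g /\
  (* (iv) *)
  (exists C : R, forall eps, 0 < eps < 1 -> forall x y, Qunion x y ->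
     Rabs (dx (cmp1 (g_eps g P1 chi eps)) x y - dx (cmp1 g) x y) <= C * eps /\
     Rabs (dy (cmp1 (g_eps g P1 chi eps)) x y - dy (cmp1 g) x y) <= C * eps /\
     Rabs (dx (cmp2 (g_eps g P1 chi eps)) x y - dx (cmp2 g) x y) <= C * eps /\
     Rabs (dy (cmp2 (g_eps g P1 chi eps)) x y - dy (cmp2 g) x y) <= C * eps) /\
  (* (v) *)
  (exists eps0, 0 < eps0 /\ forall eps, 0 < eps < eps0 -> forall x y, Qunion x y ->
     lambda / 2 <= jac_det (g_eps g P1 chi eps) x y).
Proof.
destruct hP as (P1_poly & P2_poly & P3_poly & P4_poly).
destruct hg as (g_Q1 & g_Q2 & g_Q3 & g_Q4).
destruct hC1 as (G & G_C1 & G_ext).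
destruct hchi as (chi_smooth & chi_supp & _ & chi_one & _).
split; [|split; [|split; [|split]]].
- intros eps Heps; apply (g_eps_regular g G P1 P2 P3 P4 chi); auto; lra.
- intros eps Heps; destruct (g_eps_near_far g P1 chi chi_one eps) as [Hnear Hfar]; [lra|].
  split; intros x y _; [apply Hnear | apply Hfar].
- apply (g_eps_W21_conv g G P1 P2 P3 P4 chi); assumption.
- destruct (g_eps_partials_close g G P1 P2 P3 P4 chi) as [C HC]; auto.
  exists C; intros eps Heps; apply HC; lra.
- apply (g_eps_jac_det g G P1 P2 P3 P4 chi); assumption.
Qed.
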